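(* Suppose the random walk $R$ is irreducible, aperiodic, positive recurrent and has negative drift, and let $F:S\to[0,\infty)$ be $C$-linear with coefficients $f_{k,i}$. Let $$f^*=\max_{k\in K}\max_{i=0,\dots,M}\max\{f_{k,i},1\},\qquad v_i=\frac{-f^*}{\sup_{n\in S:\,i\in I(n)}\{s^+_i(n)-s^-_i(n)\}}\ (i=1,\dots,M),\qquad V(n)=\sum_{i=1}^M v_i n_i^2.$$ Then there exists a constant $b_0<\infty$ such that for all $n\in S$, $u\in N_{c(n)}$ and $t\ge0$, $$|D^t_u(n)|\le V(n)+V(n+u)+b_0.$$
   Context: Let $M\ge 1$ and $S=\{0,1,2,\dots\}^M$. For $n\in S$ let $N(n)=\{u\in\{-1,0,1\}^M: n+u\in S\}$. A partition $C=\{C_k\}_{k\in K}$ ($K$ finite) of $S$ is a family of pairwise disjoint sets covering $S$ such that $N(n)=N(n')$ whenever $n,n'$ lie in the same $C_k$; write $N_k$ for this common set and $c(n)$ for the index $k$ with $n\in C_k$. The random walk $R$ is a discrete-time Markov chain on $S$ with transition probabilities $P(n,n+u)=p_{c(n),u}\ge0$ for $u\in N_{c(n)}$, $P(n,m)=0$ if $m-n\notin N_{c(n)}$, and $\sum_{u\in N_k}p_{k,u}=1$ for every $k$. For $n\in S$, $I(n)=\{i\in\{1,\dots,M\}: n_i>0\}$, $s^+_i(n)=\sum_{u\in N_{c(n)}:u_i=1}p_{c(n),u}$ and $s^-_i(n)=\sum_{u\in N_{c(n)}:u_i=-1}p_{c(n),u}$. $R$ has negative drift if $\sup_{n\in S,\,i\in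 I(n)}\{s^+_i(n)-s^-_i(n)\}<0$. A function $F:S\to[0,\infty)$ is $C$-linear if there are real coefficients $f_{k,i}$ with $F(n)=f_{k,0}+\sum_{i=1}^M f_{k,i}n_i$ for all $n\in C_k$, $k\in K$. For $t\ge0$, $F^t(n)=\sum_{k=0}^{t-1}\sum_{m\in S}P^k(n,m)F(m)$, where $P^k$ is the $k$-step transition matrix, and the bias terms are $D^t_u(n)=F^t(n+u)-F^t(n)$ for $u\in N_{c(n)}$. *)

From Stdlib Require Import Reals Lra ZArith Arith List ClassicalEpsilon.
Import ListNotations.
Open Scope R_scope.

(* States n in S = N^M are lists of naturals of length M; coordinate i of the
   paper (1 <= i <= M) is list position i-1 (0-based here). *)
Definition inS (M : nat) (n : list nat) : Prop := length n = M.

Fixpoint dirs (M : nat) : list (list Z) :=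
  match M with
  | O => [[]]
  | S M' => flat_map (fun z => map (cons z) (dirs M')) [(-1)%Z; 0%Z; 1%Z]
  end.

(* n + u (for u in N(n) the result lies in S) *)
Definition addv (n : list nat) (u : list Z) : list nat :=
  map (fun p => Z.to_nat (Z.of_nat (fst p) + snd p)) (combine n u).

Definition validb (n : list nat) (u : list Z) : bool :=
  forallb (fun p => Z.leb 0 (Z.of_nat (fst p) + snd p)) (combine n u).

Definition Nset (M : nat) (n : list nat) : list (list Z) :=
  filter (validb n) (dirs M).

Definition sumR {A : Type} (l : list A) (g : A -> R) : R :=
  fold_right (fun x acc => g x + acc) 0 l.

(* One-step transition operator: (P g)(n) = sum_{u in N(n)} p_{c(n),u} g(n+u),
   i.e. sum_m P(n,m) g(m). *)
Definition Pstep (M : nat) (c : list nat -> nat) (p : nat -> list Z -> R)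
  (g : list nat -> R) (n : list nat) : R :=
  sumR (Nset M n) (fun u => p (c n) u * g (addv n u)).

Fixpoint Pk (M : nat) (c : list nat -> nat) (p : nat -> list Z -> R)
  (k : nat) (g : list nat -> R) : list nat -> R :=
  match k with
  | O => g
  | S k' => Pstep M c p (Pk M c p k' g)
  end.

Definition Pkern (M : nat) (c : list nat -> nat) (p : nat -> list Z -> R)
  (k : nat) (n m : list nat) : R :=
  Pk M c p k (fun x => if list_eq_dec Nat.eq_dec x m then 1 else 0) n.

Definition irreducible (M : nat) (c : list nat -> nat) (p : nat -> list Z -> R) : Prop :=
  forall n m, inS M n -> inS M m -> exists k, Pkern M c p k n m > 0.

(* every state has period gcd{k >= 1 : P^k(n,n) > 0} = 1 *)
Definition aperiodic (M : nat) (c : list nat -> nat) (p : nat -> list Z -> R) : Prop :=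
  forall n, inS M n ->
    forall d : nat,
      (forall k, (1 <= k)%nat -> Pkern M c p k n n > 0 -> Nat.divide d k) ->
      d = 1%nat.

(* avoid a x k = P_x(X_1 <> a, ..., X_k <> a) *)
Fixpoint avoid (M : nat) (c : list nat -> nat) (p : nat -> list Z -> R) (a : list nat) (k : nat) : list nat -> R :=
  match k with
  | O => fun _ => 1
  | S k' => fun x =>
      sumR (Nset M x) (fun u => p (c x) u *
        (if list_eq_dec Nat.eq_dec (addv x u) a then 0
         else avoid M c p a k' (addv x u)))
  end.

(* positive recurrence: E_a[tau_a] = sum_{k>=0} P_a(tau_a > k) < infinity for
   every state a (tau_a = first return time to a, k >= 1) *)
Definition positive_recurrent (M : nat) (c : list nat -> nat) (p : nat -> list Z -> R) : Prop :=
  forall a, inS M a -> exists l, infinite_sum (fun k => avoid M c p a k a) l.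

Definition splus (M : nat) (c : list nat -> nat) (p : nat -> list Z -> R) (i : nat) (n : list nat) : R :=
  sumR (Nset M n) (fun u => if Z.eq_dec (nth i u 0%Z) 1%Z then p (c n) u else 0).
Definition sminus (M : nat) (c : list nat -> nat) (p : nat -> list Z -> R) (i : nat) (n : list nat) : R :=
  sumR (Nset M n) (fun u => if Z.eq_dec (nth i u 0%Z) (-1)%Z then p (c n) u else 0).

Definition inI (n : list nat) (i : nat) : Prop := (i < length n)%nat /\ (0 < nth i n 0)%nat.

Definition drift_set_all (M : nat) (c : list nat -> nat) (p : nat -> list Z -> R) (x : R) : Prop :=
  exists n i, inS M n /\ inI n i /\ x = splus M c p i n - sminus M c p i n.

Definition drift_set (M : nat) (c : list nat -> nat) (p : nat -> list Z -> R) (i : nat) (x : R) : Prop :=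
  exists n, inS M n /\ inI n i /\ x = splus M c p i n - sminus M c p i n.

Definition negative_drift (M : nat) (c : list nat -> nat) (p : nat -> list Z -> R) : Prop :=
  exists s, is_lub (drift_set_all M c p) s /\ s < 0.

Definition Rsup (E : R -> Prop) : R :=
  epsilon (inhabits 0) (fun s => is_lub E s).

(* F is C-linear with coefficients f k i (i = 0 constant term, i = j+1 the
   coefficient of the 0-based coordinate j) *)
Definition C_linear M (c : list nat -> nat) (F : list nat -> R)
  (f : nat -> nat -> R) : Prop :=
  forall n, inS M n ->
    F n = f (c n) 0%nat + sumR (seq 0 M) (fun j => f (c n) (S j) * INR (nth j n 0%nat)).

(* f* = max_{k in K} max_{i=0..M} max{f_{k,i}, 1}, K = {0,...,nK-1} *)
Definition fstar (M nK : nat) (f : nat -> nat -> R) : R :=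
  fold_right Rmax 1
    (flat_map (fun k => map (fun i => f k i) (seq 0 (S M))) (seq 0 nK)).

Definition vcoef (M nK : nat) (c : list nat -> nat) (p : nat -> list Z -> R) (f : nat -> nat -> R) (i : nat) : R :=
  - fstar M nK f / Rsup (drift_set M c p i).

Definition Vfun (M nK : nat) (c : list nat -> nat) (p : nat -> list Z -> R) (f : nat -> nat -> R) (n : list nat) : R :=
  sumR (seq 0 M) (fun i => vcoef M nK c p f i * (INR (nth i n 0%nat))^2).

Definition Ft (M : nat) (c : list nat -> nat) (p : nat -> list Z -> R) (F : list nat -> R) (t : nat) (n : list nat) : R :=
  sumR (seq 0 t) (fun k => Pk M c p k F n).

Definition Dt (M : nat) (c : list nat -> nat) (p : nat -> list Z -> R) F t (n : list nat) (u : list Z) : R :=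
  Ft M c p F t (addv n u) - Ft M c p F t n.

(* Let Q be the transition operator killed on entering the origin 0. Since
   F^{t+1}(n) = F(n) + P F^t(n),
     F^{t+1}(n) - F^{t+1}(0) = F(n) - P^t F(0) + Q (F^t - F^t(0)) (n),
   so by induction |F^t(n) - F^t(0)| <= W(n) for every W >= 0 with F + K <= W - QW,
   where K bounds P^t F(0). Such W exist with W <= V + const: the v_i are chosen so
   that PV <= V - 2 f* |n| + const, which beats F <= f* (1 + |n|) outside a ball;
   on the ball, irreducibility and positive recurrence give a uniform positive
   probability of hitting 0 within N steps, and a multiple of the truncated occupation
   time sum_{k<N} P(no visit to 0 in k steps) supplies the missing constant. The bound K
   is W0(0) for the solution W0 with K = 0, as P^t F(0) is at most the expected sum of F
   over an excursion from 0. Finally |D^t_u(n)| <= W(n) + W(n+u). *)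

From Stdlib Require Import Reals Lra Lia ZArith List ClassicalEpsilon.
Import ListNotations.
Open Scope R_scope.

Lemma sumR_app {A} (l1 l2 : list A) g : sumR (l1 ++ l2) g = sumR l1 g + sumR l2 g.
Proof. induction l1; simpl; [lra | rewrite IHl1; lra]. Qed.

Lemma sumR_map {A B} (h : A -> B) l g : sumR (map h l) g = sumR l (fun x => g (h x)).
Proof. induction l; simpl; [lra | rewrite IHl; lra]. Qed.

Lemma sumR_plus {A} (l : list A) g h :
  sumR l (fun x => g x + h x) = sumR l g + sumR l h.
Proof. induction l; simpl; [lra | rewrite IHl; lra]. Qed.

Lemma sumR_minus {A} (l : list A) g h :
  sumR l (fun x => g x - h x) = sumR l g - sumR l h.
Proof. induction l; simpl; [lra | rewrite IHl; lra]. Qed.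

Lemma sumR_scal_l {A} (l : list A) a g : sumR l (fun x => a * g x) = a * sumR l g.
Proof. induction l; simpl; [lra | rewrite IHl; lra]. Qed.

Lemma sumR_scal_r {A} (l : list A) a g : sumR l (fun x => g x * a) = sumR l g * a.
Proof. induction l; simpl; [lra | rewrite IHl; lra]. Qed.

Lemma sumR_const {A} (l : list A) a : sumR l (fun _ => a) = INR (length l) * a.
Proof. induction l; simpl sumR; simpl length; [simpl; lra | rewrite IHl, S_INR; lra]. Qed.

Lemma sumR_ext_in {A} (l : list A) g h :
  (forall x, In x l -> g x = h x) -> sumR l g = sumR l h.
Proof. induction l; simpl; intros H; [lra | rewrite H, IHl; auto]. Qed.

Lemma sumR_le_in {A} (l : list A) g h :
  (forall x, In x l -> g x <= h x) -> sumR l g <= sumR l h.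
Proof.
  induction l; simpl; intros H; [lra |].
  pose proof (H a (or_introl eq_refl)). pose proof (IHl (fun x Hx => H x (or_intror Hx))). lra.
Qed.

Lemma sumR_nonneg {A} (l : list A) g : (forall x, In x l -> 0 <= g x) -> 0 <= sumR l g.
Proof.
  induction l; simpl; intros H; [lra |].
  pose proof (H a (or_introl eq_refl)). pose proof (IHl (fun x Hx => H x (or_intror Hx))). lra.
Qed.

Lemma sumR_ge_term {A} (l : list A) g a :
  (forall x, In x l -> 0 <= g x) -> In a l -> g a <= sumR l g.
Proof.
  induction l as [|b l IH]; simpl; intros H Ha; [contradiction |].
  destruct Ha as [<- | Ha].
  - pose proof (sumR_nonneg l g (fun x Hx => H x (or_intror Hx))). lra.
  - pose proof (H b (or_introl eq_refl)). pose proof (IH (fun x Hx => H x (or_intror Hx)) Ha). lra.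
Qed.

Lemma sumR_swap {A B} (l1 : list A) (l2 : list B) (g : A -> B -> R) :
  sumR l1 (fun a => sumR l2 (fun b => g a b)) = sumR l2 (fun b => sumR l1 (fun a => g a b)).
Proof.
  induction l1; simpl.
  - induction l2; simpl; [lra | rewrite <- IHl2; lra].
  - rewrite IHl1, <- sumR_plus. reflexivity.
Qed.

Lemma sumR_seq_S_r g t : sumR (seq 0 (S t)) g = sumR (seq 0 t) g + g t.
Proof. rewrite seq_S, sumR_app. simpl. lra. Qed.

Lemma sumR_seq_S_l g t : sumR (seq 0 (S t)) g = g O + sumR (seq 0 t) (fun k => g (S k)).
Proof. simpl. rewrite <- seq_shift, sumR_map. reflexivity. Qed.

Lemma In_dirs M u : In u (dirs M) ->
  length u = M /\ forall i, (nth i u 0 = -1 \/ nth i u 0 = 0 \/ nth i u 0 = 1)%Z.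
Proof.
  revert u; induction M as [|M IH]; intros u H.
  - destruct H as [<- | []]. split; [reflexivity |]. intros [|i]; simpl; auto.
  - change (In u (flat_map (fun z => map (cons z) (dirs M)) [(-1)%Z; 0%Z; 1%Z])) in H.
    apply in_flat_map in H as [z [Hz Hu]]. apply in_map_iff in Hu as [u' [<- Hu']].
    destruct (IH u' Hu') as [Hl Hc]. split; [simpl; auto |].
    intros [|i]; simpl; [| apply Hc]. simpl in Hz. intuition.
Qed.

Lemma In_Nset M n u : length n = M -> In u (Nset M n) ->
  length u = M /\
  (forall i, (nth i u 0 = -1 \/ nth i u 0 = 0 \/ nth i u 0 = 1)%Z) /\
  (forall i, (i < M)%nat -> (0 <= Z.of_nat (nth i n 0%nat) + nth i u 0)%Z).
Proof.
  intros Hn H. apply filter_In in H as [Hd Hv].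
  destruct (In_dirs M u Hd) as [Hl Hc]. do 2 (split; [assumption |]).
  intros i Hi. unfold validb in Hv. rewrite forallb_forall in Hv.
  assert (Hin : In (nth i n 0%nat, nth i u 0%Z) (combine n u)).
  { rewrite <- combine_nth by lia. apply nth_In. rewrite length_combine. lia. }
  specialize (Hv _ Hin). simpl in Hv. lia.
Qed.

Lemma addv_length n u : length n = length u -> length (addv n u) = length n.
Proof. intros H. unfold addv. rewrite length_map, length_combine. lia. Qed.

Lemma addv_nth n u i : length n = length u -> (i < length n)%nat ->
  nth i (addv n u) 0%nat = Z.to_nat (Z.of_nat (nth i n 0%nat) + nth i u 0%Z).
Proof.
  intros H Hi. unfold addv.
  set (g := fun q : nat * Z => Z.to_nat (Z.of_nat (fst q) + snd q)).
  rewrite (nth_indep _ 0%nat (g (0%nat, 0%Z))) by (rewrite length_map, length_combine; lia).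
  rewrite map_nth, combine_nth by assumption. reflexivity.
Qed.

Lemma inS_addv M n u : inS M n -> In u (Nset M n) -> inS M (addv n u).
Proof.
  intros Hn Hu. destruct (In_Nset M n u Hn Hu) as [Hl _].
  unfold inS. rewrite addv_length; unfold inS in Hn; lia.
Qed.

Lemma INR_addv_nth M n u i : inS M n -> In u (Nset M n) -> (i < M)%nat ->
  INR (nth i (addv n u) 0%nat) = INR (nth i n 0%nat) + IZR (nth i u 0%Z).
Proof.
  intros Hn Hu Hi. destruct (In_Nset M n u Hn Hu) as [Hl [_ Hv]].
  unfold inS in Hn. rewrite addv_nth by lia.
  rewrite INR_IZR_INZ, Z2Nat.id by (apply Hv; assumption).
  rewrite plus_IZR, <- INR_IZR_INZ. reflexivity.
Qed.

Definition l1norm (M : nat) (n : list nat) : R := sumR (seq 0 M) (fun i => INR (nth i n 0%nat)).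

Lemma l1norm_nonneg M n : 0 <= l1norm M n.
Proof. apply sumR_nonneg. intros; apply pos_INR. Qed.

Lemma In_le_l1norm M n x : inS M n -> In x n -> INR x <= l1norm M n.
Proof.
  intros Hn Hx. apply (In_nth _ _ 0%nat) in Hx as [i [Hi <-]].
  apply (sumR_ge_term _ (fun i => INR (nth i n 0%nat))).
  - intros; apply pos_INR.
  - apply in_seq. unfold inS in Hn. lia.
Qed.

Fixpoint box (L m : nat) : list (list nat) :=
  match m with
  | O => [[]]
  | S m' => flat_map (fun a => map (cons a) (box L m')) (seq 0 (S L))
  end.

Lemma In_box L n : (forall x, In x n -> (x <= L)%nat) -> In n (box L (length n)).
Proof.
  induction n as [|a n IH]; intros H; [left; reflexivity |].
  change (In (a :: n) (flat_map (fun b => map (cons b) (box L (length n))) (seq 0 (S L)))).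
  apply in_flat_map. exists a. split.
  - apply in_seq. pose proof (H a (or_introl eq_refl)). lia.
  - apply in_map, IH. intros x Hx. apply H. right; assumption.
Qed.

Section Chain.
Variables (M : nat) (c : list nat -> nat) (p : nat -> list Z -> R).
Hypothesis Hp0 : forall n u, inS M n -> In u (Nset M n) -> 0 <= p (c n) u.
Hypothesis Hp1 : forall n, inS M n -> sumR (Nset M n) (fun u => p (c n) u) = 1.

Local Notation P := (Pstep M c p).

Lemma Pstep_plus g h n : P (fun x => g x + h x) n = P g n + P h n.
Proof. unfold Pstep. rewrite <- sumR_plus. apply sumR_ext_in. intros; lra. Qed.

Lemma Pstep_scal a g n : P (fun x => a * g x) n = a * P g n.
Proof. unfold Pstep. rewrite <- sumR_scal_l. apply sumR_ext_in. intros; lra. Qed.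

Lemma Pstep_const a n : inS M n -> P (fun _ => a) n = a.
Proof. intros Hn. unfold Pstep. rewrite sumR_scal_r, Hp1 by assumption. lra. Qed.

Lemma Pstep_le g h n : inS M n -> (forall x, inS M x -> g x <= h x) -> P g n <= P h n.
Proof.
  intros Hn H. apply sumR_le_in. intros u Hu.
  apply Rmult_le_compat_l; [auto | apply H, inS_addv; assumption].
Qed.

Lemma Pstep_nonneg g n : inS M n -> (forall x, inS M x -> 0 <= g x) -> 0 <= P g n.
Proof. intros Hn H. rewrite <- (Pstep_const 0 n Hn). apply Pstep_le; assumption. Qed.

Lemma Pstep_sumR {A} (l : list A) (G : A -> list nat -> R) n :
  P (fun x => sumR l (fun a => G a x)) n = sumR l (fun a => P (G a) n).
Proof.
  induction l as [|a l IH]; simpl.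
  - unfold Pstep. rewrite (sumR_ext_in _ _ (fun _ => 0 * 0)) by (intros; lra).
    rewrite sumR_scal_r. lra.
  - rewrite Pstep_plus, IH. reflexivity.
Qed.

Definition orig : list nat := repeat 0%nat M.

Lemma inS_orig : inS M orig.
Proof. apply repeat_length. Qed.

Definition Qstep (g : list nat -> R) (n : list nat) : R :=
  sumR (Nset M n) (fun u => p (c n) u *
    (if list_eq_dec Nat.eq_dec (addv n u) orig then 0 else g (addv n u))).

Fixpoint Qiter (k : nat) (g : list nat -> R) : list nat -> R :=
  match k with O => g | S k' => Qstep (Qiter k' g) end.

Definition hit (n : list nat) : R :=
  P (fun x => if list_eq_dec Nat.eq_dec x orig then 1 else 0) n.

Definition survival (k : nat) : list nat -> R := Qiter k (fun _ => 1).

Lemma Qstep_plus g h n : Qstep (fun x => g x + h x) n = Qstep g n + Qstep h n.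
Proof.
  unfold Qstep. rewrite <- sumR_plus. apply sumR_ext_in. intros.
  destruct list_eq_dec; lra.
Qed.

Lemma Qstep_scal a g n : Qstep (fun x => a * g x) n = a * Qstep g n.
Proof.
  unfold Qstep. rewrite <- sumR_scal_l. apply sumR_ext_in. intros.
  destruct list_eq_dec; lra.
Qed.

Lemma Qstep_le g h n : inS M n -> (forall x, inS M x -> g x <= h x) -> Qstep g n <= Qstep h n.
Proof.
  intros Hn H. apply sumR_le_in. intros u Hu.
  apply Rmult_le_compat_l; [auto |].
  destruct list_eq_dec; [lra | apply H, inS_addv; assumption].
Qed.

Lemma Qstep_sumR {A} (l : list A) (G : A -> list nat -> R) n :
  Qstep (fun x => sumR l (fun a => G a x)) n = sumR l (fun a => Qstep (G a) n).
Proof.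
  induction l as [|a l IH]; simpl.
  - unfold Qstep. rewrite (sumR_ext_in _ _ (fun _ => 0 * 0))
      by (intros; simpl; destruct list_eq_dec; lra).
    rewrite sumR_scal_r. lra.
  - rewrite Qstep_plus, IH. reflexivity.
Qed.

Lemma Pstep_split g n : P g n = Qstep g n + hit n * g orig.
Proof.
  unfold hit, Pstep, Qstep. rewrite <- sumR_scal_r, <- sumR_plus.
  apply sumR_ext_in. intros u _. destruct list_eq_dec as [-> | _]; lra.
Qed.

Lemma hit_nonneg n : inS M n -> 0 <= hit n.
Proof. intros Hn. apply Pstep_nonneg; [assumption |]. intros; destruct list_eq_dec; lra. Qed.

Lemma Qstep_nonneg g n : inS M n -> (forall x, inS M x -> 0 <= g x) -> 0 <= Qstep g n.
Proof.
  intros Hn H. apply sumR_nonneg. intros u Hu.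
  apply Rmult_le_pos; [auto |]. destruct list_eq_dec; [lra | apply H, inS_addv; assumption].
Qed.

Lemma Qstep_const a n : inS M n -> Qstep (fun _ => a) n = a * (1 - hit n).
Proof. intros Hn. pose proof (Pstep_split (fun _ => a) n). rewrite Pstep_const in H; auto. lra. Qed.

Lemma hit_le1 n : inS M n -> hit n <= 1.
Proof.
  intros Hn. pose proof (Qstep_const 1 n Hn).
  pose proof (Qstep_nonneg (fun _ => 1) n Hn ltac:(intros; lra)). lra.
Qed.

Lemma Qstep_le_Pstep g n : inS M n -> (forall x, inS M x -> 0 <= g x) -> Qstep g n <= P g n.
Proof.
  intros Hn H. rewrite Pstep_split.
  pose proof (hit_nonneg n Hn). pose proof (H orig inS_orig). nra.
Qed.

Lemma Qiter_nonneg g k n : inS M n -> (forall x, inS M x -> 0 <= g x) -> 0 <= Qiter k g n.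
Proof.
  intros Hn Hg. revert n Hn. induction k; intros n Hn; simpl; auto.
  apply Qstep_nonneg; auto.
Qed.

Lemma survival_bounds k n : inS M n -> 0 <= survival k n <= 1.
Proof.
  revert n; induction k; intros n Hn; [cbv [survival Qiter]; lra |].
  change (survival (S k) n) with (Qstep (survival k) n).
  split; [apply Qstep_nonneg; [assumption |]; intros; apply IHk; assumption |].
  apply Rle_trans with (Qstep (fun _ => 1) n).
  - apply Qstep_le; [assumption |]. intros; apply IHk; assumption.
  - rewrite Qstep_const by assumption. pose proof (hit_nonneg n Hn). lra.
Qed.

Lemma survival_S_le k n : inS M n -> survival (S k) n <= survival k n.
Proof.
  revert n; induction k; intros n Hn.
  - change (Qstep (fun _ => 1) n <= 1). rewrite Qstep_const by assumption.
    pose proof (hit_nonneg n Hn). lra.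
  - apply Qstep_le; assumption.
Qed.

Lemma survival_antitone k N n : inS M n -> (k <= N)%nat -> survival N n <= survival k n.
Proof.
  intros Hn H. induction H; [lra |]. pose proof (survival_S_le m n Hn). lra.
Qed.

Lemma avoid_orig_survival k x : avoid M c p orig k x = survival k x.
Proof.
  revert x; induction k; intros x; [reflexivity |].
  apply sumR_ext_in. intros u _. rewrite IHk. reflexivity.
Qed.

Lemma Pkern_orig_le k n : inS M n -> Pkern M c p (S k) n orig <= 1 - survival (S k) n.
Proof.
  unfold Pkern. revert n; induction k; intros n Hn.
  - change (hit n <= 1 - Qstep (fun _ => 1) n).
    rewrite Qstep_const by assumption. lra.
  - change (P (Pk M c p (S k) (fun x => if list_eq_dec Nat.eq_dec x orig then 1 else 0)) n
            <= 1 - Qstep (survival (S k)) n).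
    apply Rle_trans with (P (fun x => 1 + -1 * survival (S k) x) n).
    + apply Pstep_le; [assumption |]. intros x Hx. pose proof (IHk x Hx). lra.
    + rewrite Pstep_plus, Pstep_scal, Pstep_const by assumption.
      pose proof (Qstep_le_Pstep (survival (S k)) n Hn
                    (fun x Hx => proj1 (survival_bounds (S k) x Hx))).
      lra.
Qed.

Hypothesis Hirr : irreducible M c p.
Hypothesis Hrec : positive_recurrent M c p.

(* From [orig], convergence of the series of survival probabilities forces them to
   drop below 1; elsewhere, irreducibility gives a positive chance of reaching [orig]. *)
Lemma survival_lt1 b : inS M b -> exists k, survival k b < 1.
Proof.
  intros Hb. destruct (list_eq_dec Nat.eq_dec b orig) as [-> | Hne].
  - destruct (Hrec orig inS_orig) as [l Hl]. destruct (Hl (1/2)) as [N HN]; [lra |].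
    pose proof (HN N (le_n _)) as H1. pose proof (HN (S N) (le_S _ _ (le_n _))) as H2.
    set (a := fun k => avoid M c p orig k orig) in *.
    change (sum_f_R0 a (S N)) with (sum_f_R0 a N + a (S N)) in H2.
    unfold Rdist in *. apply Rabs_def2 in H1, H2.
    exists (S N). rewrite <- avoid_orig_survival. fold (a (S N)). lra.
  - destruct (Hirr b orig Hb inS_orig) as [[|k] Hk].
    + unfold Pkern in Hk. simpl in Hk. destruct list_eq_dec; [contradiction | lra].
    + exists (S k). pose proof (Pkern_orig_le k b Hb). lra.
Qed.

Lemma survival_unif_list (l : list (list nat)) :
  exists N d, 0 < d /\ forall b, In b l -> inS M b -> survival N b <= 1 - d.
Proof.
  induction l as [|b l [N [d [Hd H]]]].
  - exists O, 1. split; [lra | intros b []].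
  - destruct (Nat.eq_dec (length b) M) as [Hb | Hb].
    + destruct (survival_lt1 b Hb) as [k Hk].
      exists (Nat.max k N), (Rmin (1 - survival k b) d). split; [apply Rmin_pos; lra |].
      intros b' [<- | Hb'] Hs.
      * pose proof (survival_antitone k (Nat.max k N) b Hs (Nat.le_max_l _ _)).
        pose proof (Rmin_l (1 - survival k b) d). lra.
      * pose proof (survival_antitone N (Nat.max k N) b' Hs (Nat.le_max_r _ _)).
        pose proof (Rmin_r (1 - survival k b) d). pose proof (H b' Hb' Hs). lra.
    + exists N, d. split; [assumption |]. intros b' [<- | Hb'] Hs; [contradiction | auto].
Qed.

Lemma survival_unif_ball r : exists N d, 0 < d /\
  forall b, inS M b -> l1norm M b <= r -> survival N b <= 1 - d.
Proof.
  destruct (INR_archimed 1 r) as [L HL]; [lra |].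
  destruct (survival_unif_list (box L M)) as [N [d [Hd H]]].
  exists N, d. split; [assumption |]. intros b Hb Hr. apply H; [| assumption].
  rewrite <- Hb. apply In_box. intros x Hx.
  apply INR_le. pose proof (In_le_l1norm M b x Hb Hx). lra.
Qed.

Variable F : list nat -> R.
Hypothesis HF0 : forall n, inS M n -> 0 <= F n.

Lemma Pk_nonneg t n : inS M n -> 0 <= Pk M c p t F n.
Proof. revert n; induction t; intros n Hn; simpl; auto. apply Pstep_nonneg; auto. Qed.

Lemma Ft_S_l t n : Ft M c p F (S t) n = F n + P (Ft M c p F t) n.
Proof. unfold Ft. rewrite sumR_seq_S_l, Pstep_sumR. reflexivity. Qed.

Lemma Ft_S_r t n : Ft M c p F (S t) n = Ft M c p F t n + Pk M c p t F n.
Proof. apply sumR_seq_S_r. Qed.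

Definition taboo_sum (t : nat) (x : list nat) : R := sumR (seq 0 t) (fun k => Qiter k F x).

Lemma taboo_sum_S_l t x : taboo_sum (S t) x = F x + Qstep (taboo_sum t) x.
Proof. unfold taboo_sum. rewrite sumR_seq_S_l, Qstep_sumR. reflexivity. Qed.

Lemma taboo_sum_le W : (forall n, inS M n -> 0 <= W n) ->
  (forall n, inS M n -> F n <= W n - Qstep W n) ->
  forall t n, inS M n -> taboo_sum t n <= W n.
Proof.
  intros HW0 HW t. induction t; intros n Hn; [apply HW0; assumption |].
  rewrite taboo_sum_S_l. pose proof (HW n Hn).
  assert (Qstep (taboo_sum t) n <= Qstep W n) by (apply Qstep_le; assumption). lra.
Qed.

(* Split the t-step expectation according to whether [orig] was visited. *)
Lemma Pk_le_taboo_sum t n : inS M n -> Pk M c p t F n <= Qiter t F n + taboo_sum t orig.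
Proof.
  revert n. induction t; intros n Hn; [unfold taboo_sum; simpl; lra |].
  change (P (Pk M c p t F) n <= Qstep (Qiter t F) n + taboo_sum (S t) orig).
  apply Rle_trans with (P (fun x => Qiter t F x + taboo_sum t orig) n).
  - apply Pstep_le; assumption.
  - rewrite Pstep_plus, Pstep_const, Pstep_split by assumption.
    unfold taboo_sum at 2. rewrite sumR_seq_S_r. fold (taboo_sum t orig).
    pose proof (hit_le1 n Hn). pose proof (hit_nonneg n Hn).
    pose proof (Qiter_nonneg F t orig inS_orig HF0). nra.
Qed.

Lemma Pk_orig_le W : (forall n, inS M n -> 0 <= W n) ->
  (forall n, inS M n -> F n <= W n - Qstep W n) ->
  forall t, Pk M c p t F orig <= W orig.
Proof.
  intros HW0 HW t. pose proof (Pk_le_taboo_sum t orig inS_orig).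
  pose proof (taboo_sum_le W HW0 HW (S t) orig inS_orig).
  unfold taboo_sum in *. rewrite sumR_seq_S_r in *. lra.
Qed.

Lemma Qstep_abs_le g G n : inS M n -> (forall x, inS M x -> Rabs (g x) <= G x) ->
  Rabs (Qstep g n) <= Qstep G n.
Proof.
  intros Hn H. apply Rabs_le. split.
  - replace (- Qstep G n) with (Qstep (fun x => -1 * G x) n) by (rewrite Qstep_scal; ring).
    apply Qstep_le; [assumption |].
    intros x Hx. pose proof (H x Hx). pose proof (Rle_abs (- g x)). rewrite Rabs_Ropp in *. lra.
  - apply Qstep_le; [assumption |]. intros x Hx. pose proof (H x Hx). pose proof (Rle_abs (g x)). lra.
Qed.

Lemma Ft_S_dev_orig t n : inS M n ->
  Ft M c p F (S t) n - Ft M c p F (S t) orig =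
  F n - Pk M c p t F orig + Qstep (fun x => Ft M c p F t x - Ft M c p F t orig) n.
Proof.
  intros Hn. rewrite (Ft_S_l t n), (Ft_S_r t orig), Pstep_split. unfold Rminus.
  rewrite (Qstep_plus (Ft M c p F t) (fun _ => - Ft M c p F t orig)), Qstep_const by assumption.
  ring.
Qed.

Lemma Ft_dev_orig_le G K : (forall n, inS M n -> 0 <= G n) ->
  (forall n, inS M n -> F n + K <= G n - Qstep G n) ->
  (forall t, Pk M c p t F orig <= K) ->
  forall t n, inS M n -> Rabs (Ft M c p F t n - Ft M c p F t orig) <= G n.
Proof.
  intros HG0 HG HK t. induction t; intros n Hn.
  - unfold Ft. simpl. rewrite Rminus_0_r, Rabs_R0. auto.
  - rewrite Ft_S_dev_orig by assumption.
    pose proof (Qstep_abs_le _ G n Hn IHt).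
    pose proof (Pk_nonneg t orig inS_orig). pose proof (HK t).
    pose proof (HF0 n Hn). pose proof (HG n Hn).
    eapply Rle_trans; [apply Rabs_triang |].
    assert (Rabs (F n - Pk M c p t F orig) <= F n + K) by (apply Rabs_le; lra). lra.
Qed.

Variables (V : list nat -> R) (fs s : R).
Hypothesis Hfs : 0 < fs.
Hypothesis Hs : 0 <= s.
Hypothesis HF_le : forall n, inS M n -> F n <= fs * (1 + l1norm M n).
Hypothesis HV0 : forall n, inS M n -> 0 <= V n.
Hypothesis HV_drift : forall n, inS M n -> P V n <= V n - 2 * fs * l1norm M n + s.

Definition occupation (N : nat) (x : list nat) : R := sumR (seq 0 N) (fun k => survival k x).

Lemma occupation_bounds N x : inS M x -> 0 <= occupation N x <= INR N.
Proof.
  intros Hx. split.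
  - apply sumR_nonneg. intros; apply survival_bounds; assumption.
  - replace (INR N) with (sumR (seq 0 N) (fun _ => 1))
      by (rewrite sumR_const, length_seq; ring).
    apply sumR_le_in. intros; apply survival_bounds; assumption.
Qed.

Lemma occupation_telescope N x : occupation N x - Qstep (occupation N) x = 1 - survival N x.
Proof.
  unfold occupation. rewrite Qstep_sumR.
  pose proof (sumR_seq_S_r (fun k => survival k x) N) as Er.
  pose proof (sumR_seq_S_l (fun k => survival k x) N) as El.
  cbv beta in Er, El. change (survival 0 x) with 1 in El.
  change (sumR (seq 0 N) (fun k => Qstep (survival k) x))
    with (sumR (seq 0 N) (fun k => survival (S k) x)).
  lra.
Qed.

Lemma taboo_drift n : inS M n -> 2 * fs * l1norm M n - s <= V n - Qstep V n.
Proof. intros Hn. pose proof (HV_drift n Hn). pose proof (Qstep_le_Pstep V n Hn HV0). lra. Qed.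

Lemma supersolution K : 0 <= K -> exists W bW,
  (forall n, inS M n -> 0 <= W n <= V n + bW) /\
  (forall n, inS M n -> F n + K <= W n - Qstep W n).
Proof.
  intros HK. set (C := s + fs + K).
  destruct (survival_unif_ball (C / fs)) as [N [d [Hd Hball]]].
  assert (HCd : 0 <= C / d) by (unfold C; apply Rmult_le_pos; [| left; apply Rinv_0_lt_compat]; lra).
  exists (fun x => V x + C / d * occupation N x), (C / d * INR N). split.
  - intros n Hn. pose proof (occupation_bounds N n Hn). pose proof (HV0 n Hn).
    split; [nra |]. apply Rplus_le_compat_l, Rmult_le_compat_l; lra.
  - intros n Hn. rewrite Qstep_plus, Qstep_scal.
    pose proof (occupation_telescope N n). pose proof (survival_bounds N n Hn).
    pose proof (taboo_drift n Hn). pose proof (HF_le n Hn). pose proof (l1norm_nonneg M n).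
    assert (Hocc : 0 <= C / d * (1 - survival N n)) by (apply Rmult_le_pos; lra).
    destruct (Rle_dec (l1norm M n) (C / fs)) as [Hin | Hout].
    + pose proof (Hball n Hn Hin).
      assert (C <= C / d * (1 - survival N n)).
      { replace C with (C / d * d) at 1 by (field; lra). apply Rmult_le_compat_l; lra. }
      unfold C in *. nra.
    + assert (C <= fs * l1norm M n).
      { replace C with (fs * (C / fs)) by (field; lra). apply Rmult_le_compat_l; lra. }
      unfold C in *. nra.
Qed.

Lemma Dt_abs_le : exists b0, forall n u t, inS M n -> In u (Nset M n) ->
  Rabs (Dt M c p F t n u) <= V n + V (addv n u) + b0.
Proof.
  destruct (supersolution 0 (Rle_refl 0)) as [W0 [b [HW0 HQW0]]].
  assert (HK : forall t, Pk M c p t F orig <= W0 orig).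
  { apply Pk_orig_le; [apply HW0 | intros n Hn; pose proof (HQW0 n Hn); lra]. }
  destruct (supersolution (W0 orig) (proj1 (HW0 orig inS_orig))) as [W [bW [HW HQW]]].
  exists (2 * bW). intros n u t Hn Hu.
  assert (Hnu : inS M (addv n u)) by (apply inS_addv; assumption).
  pose proof (Ft_dev_orig_le W _ (fun x Hx => proj1 (HW x Hx)) HQW HK t n Hn).
  pose proof (Ft_dev_orig_le W _ (fun x Hx => proj1 (HW x Hx)) HQW HK t _ Hnu).
  pose proof (HW n Hn). pose proof (HW _ Hnu).
  unfold Dt. replace (Ft M c p F t (addv n u) - Ft M c p F t n) with
    ((Ft M c p F t (addv n u) - Ft M c p F t orig) - (Ft M c p F t n - Ft M c p F t orig)) by ring.
  eapply Rle_trans; [apply Rabs_triang |]. rewrite Rabs_Ropp. lra.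
Qed.
End Chain.

Lemma fold_Rmax_ge_init l : 1 <= fold_right Rmax 1 l.
Proof. induction l; simpl; [lra | eapply Rle_trans; [apply IHl | apply Rmax_r]]. Qed.

Lemma fold_Rmax_ge_In l x : In x l -> x <= fold_right Rmax 1 l.
Proof.
  induction l; simpl; intros H; [contradiction |].
  destruct H as [<- | H]; [apply Rmax_l | eapply Rle_trans; [apply IHl, H | apply Rmax_r]].
Qed.

Lemma fstar_ge1 M nK f : 1 <= fstar M nK f.
Proof. apply fold_Rmax_ge_init. Qed.

Lemma fstar_ge M nK f k i : (k < nK)%nat -> (i <= M)%nat -> f k i <= fstar M nK f.
Proof.
  intros Hk Hi. apply fold_Rmax_ge_In, in_flat_map. exists k. split.
  - apply in_seq; lia.
  - apply in_map_iff. exists i. split; [reflexivity | apply in_seq; lia].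
Qed.

Lemma Rsup_is_lub E : (exists x, E x) -> bound E -> is_lub E (Rsup E).
Proof.
  intros Hne Hb. unfold Rsup. apply epsilon_spec.
  destruct (completeness E Hb Hne) as [m Hm]. exists m; exact Hm.
Qed.

Lemma F_le_fstar M nK c F f n : (forall n, inS M n -> (c n < nK)%nat) ->
  C_linear M c F f -> inS M n -> F n <= fstar M nK f * (1 + l1norm M n).
Proof.
  intros Hc HFlin Hn. rewrite (HFlin n Hn). specialize (Hc n Hn).
  assert (f (c n) 0%nat <= fstar M nK f) by (apply fstar_ge; lia).
  assert (sumR (seq 0 M) (fun j => f (c n) (S j) * INR (nth j n 0%nat))
          <= fstar M nK f * l1norm M n).
  { unfold l1norm. rewrite <- sumR_scal_l. apply sumR_le_in. intros j Hj. apply in_seq in Hj.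
    apply Rmult_le_compat_r; [apply pos_INR | apply fstar_ge; lia]. }
  lra.
Qed.

Section Quadratic.
Variables (M nK : nat) (c : list nat -> nat) (p : nat -> list Z -> R) (f : nat -> nat -> R).
Hypothesis Hp0 : forall n u, inS M n -> In u (Nset M n) -> 0 <= p (c n) u.
Hypothesis Hp1 : forall n, inS M n -> sumR (Nset M n) (fun u => p (c n) u) = 1.
Hypothesis Hdrift : negative_drift M c p.

Local Notation fs := (fstar M nK f).
Local Notation v := (vcoef M nK c p f).
Local Notation sigma i := (Rsup (drift_set M c p i)).

Lemma drift_sup_neg i : (i < M)%nat -> is_lub (drift_set M c p i) (sigma i) /\ sigma i < 0.
Proof.
  intros Hi. destruct Hdrift as [s0 [[Hub _] Hs0]].
  assert (Hub' : is_upper_bound (drift_set M c p i) s0).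
  { intros x [n [Hn [HI E]]]. apply Hub. exists n, i. auto. }
  assert (Hlub : is_lub (drift_set M c p i) (sigma i)).
  { apply Rsup_is_lub; [| exists s0; exact Hub'].
    exists (splus M c p i (repeat 1%nat M) - sminus M c p i (repeat 1%nat M)), (repeat 1%nat M).
    repeat split; [apply repeat_length | rewrite repeat_length; assumption |].
    rewrite nth_repeat_lt by assumption. lia. }
  split; [assumption |]. pose proof (proj2 Hlub s0 Hub'). lra.
Qed.

Lemma vcoef_pos i : (i < M)%nat -> 0 < v i.
Proof.
  intros Hi. pose proof (proj2 (drift_sup_neg i Hi)). pose proof (fstar_ge1 M nK f).
  unfold vcoef. replace (- fs / sigma i) with (fs * / - sigma i) by (field; lra).
  apply Rmult_lt_0_compat; [lra | apply Rinv_0_lt_compat; lra].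
Qed.

Lemma Vfun_nonneg n : 0 <= Vfun M nK c p f n.
Proof.
  apply sumR_nonneg. intros i Hi. apply in_seq in Hi. pose proof (vcoef_pos i ltac:(lia)).
  apply Rmult_le_pos; [lra | apply pow2_ge_0].
Qed.

Lemma sum_vcoef_nonneg : 0 <= sumR (seq 0 M) v.
Proof. apply sumR_nonneg. intros i Hi. apply in_seq in Hi. pose proof (vcoef_pos i ltac:(lia)). lra. Qed.

Lemma mean_increment n i : inS M n ->
  sumR (Nset M n) (fun u => p (c n) u * IZR (nth i u 0%Z)) = splus M c p i n - sminus M c p i n.
Proof.
  intros Hn. unfold splus, sminus. rewrite <- sumR_minus. apply sumR_ext_in.
  intros u Hu. destruct (In_Nset M n u Hn Hu) as [_ [H _]].
  destruct (H i) as [E | [E | E]]; rewrite E; repeat destruct Z.eq_dec; try lia; lra.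
Qed.

(* With x = n_i and increment z in {-1,0,1}: (x + z)^2 <= x^2 + 2 x z + 1, and the
   mean of z is at most sigma i < 0 whenever x > 0, while v i * sigma i = - fs. *)
Lemma quadratic_drift_coord n i : inS M n -> (i < M)%nat ->
  sumR (Nset M n) (fun u => p (c n) u * (v i * INR (nth i (addv n u) 0%nat) ^ 2))
  <= v i * INR (nth i n 0%nat) ^ 2 - 2 * fs * INR (nth i n 0%nat) + v i.
Proof.
  intros Hn Hi. set (x := INR (nth i n 0%nat)). pose proof (vcoef_pos i Hi) as Hv.
  apply Rle_trans with (sumR (Nset M n) (fun u => (v i * x ^ 2) * p (c n) u +
      (2 * v i * x) * (p (c n) u * IZR (nth i u 0%Z)) + v i * p (c n) u)).
  { apply sumR_le_in. intros u Hu. rewrite (INR_addv_nth M) by assumption. fold x.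
    destruct (In_Nset M n u Hn Hu) as [_ [H _]]. pose proof (Hp0 n u Hn Hu).
    assert (IZR (nth i u 0%Z) ^ 2 <= 1) by (destruct (H i) as [E | [E | E]]; rewrite E; simpl; lra).
    assert (0 <= p (c n) u * v i) by (apply Rmult_le_pos; lra). nra. }
  rewrite !sumR_plus, !sumR_scal_l, mean_increment, Hp1 by assumption.
  assert (Hmean : v i * x * (splus M c p i n - sminus M c p i n) <= - fs * x).
  { destruct (Nat.eq_dec (nth i n 0%nat) 0) as [E | E].
    - unfold x. rewrite E. simpl. lra.
    - destruct (drift_sup_neg i Hi) as [[Hub _] Hneg].
      assert (Hle : splus M c p i n - sminus M c p i n <= sigma i).
      { apply Hub. exists n. repeat split; [assumption | unfold inS in Hn; lia | lia]. }
      assert (Evs : v i * sigma i = - fs) by (unfold vcoef; field; lra).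
      assert (0 <= x) by apply pos_INR.
      assert (v i * (splus M c p i n - sminus M c p i n) <= - fs)
        by (rewrite <- Evs; apply Rmult_le_compat_l; lra).
      nra. }
  nra.
Qed.

Lemma Vfun_drift n : inS M n ->
  Pstep M c p (Vfun M nK c p f) n
  <= Vfun M nK c p f n - 2 * fs * l1norm M n + sumR (seq 0 M) v.
Proof.
  intros Hn. unfold Pstep, Vfun.
  rewrite (sumR_ext_in _ _ (fun u => sumR (seq 0 M) (fun i => p (c n) u *
      (v i * INR (nth i (addv n u) 0%nat) ^ 2)))) by (intros; rewrite sumR_scal_l; reflexivity).
  rewrite sumR_swap.
  apply Rle_trans with (sumR (seq 0 M) (fun i => v i * INR (nth i n 0%nat) ^ 2 +
     (-2 * fs) * INR (nth i n 0%nat) + v i)).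
  - apply sumR_le_in. intros i Hi. apply in_seq in Hi.
    pose proof (quadratic_drift_coord n i Hn ltac:(lia)). lra.
  - rewrite !sumR_plus, sumR_scal_l. unfold l1norm. lra.
Qed.
End Quadratic.

Theorem theorem4p2
  (M nK : nat) (c : list nat -> nat) (p : nat -> list Z -> R)
  (F : list nat -> R) (f : nat -> nat -> R)
  (HM : (1 <= M)%nat)
  (Hc : forall n, inS M n -> (c n < nK)%nat)
  (HN : forall n n', inS M n -> inS M n' -> c n = c n' -> Nset M n = Nset M n')
  (Hp0 : forall n u, inS M n -> In u (Nset M n) -> 0 <= p (c n) u)
  (Hp1 : forall n, inS M n -> sumR (Nset M n) (fun u => p (c n) u) = 1)
  (Hirr : irreducible M c p)
  (Haper : aperiodic M c p)
  (Hrec : positive_recurrent M c p)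
  (Hdrift : negative_drift M c p)
  (HF0 : forall n, inS M n -> 0 <= F n)
  (HFlin : C_linear M c F f) :
  exists b0 : R, forall n u t, inS M n -> In u (Nset M n) ->
    Rabs (Dt M c p F t n u) <= Vfun M nK c p f n + Vfun M nK c p f (addv n u) + b0.
Proof.
  apply (Dt_abs_le M c p Hp0 Hp1 Hirr Hrec F HF0 (Vfun M nK c p f) (fstar M nK f)
           (sumR (seq 0 M) (vcoef M nK c p f))).
  - pose proof (fstar_ge1 M nK f). lra.
  - exact (sum_vcoef_nonneg M nK c p f Hdrift).
  - intros n Hn. exact (F_le_fstar M nK c F f n Hc HFlin Hn).
  - intros n _. exact (Vfun_nonneg M nK c p f Hdrift n).
  - exact (Vfun_drift M nK c p f Hp0 Hp1 Hdrift).
Qed.
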